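(* Let $n\ge 2$, $N>0$, $B>0$, $\alpha>1$, $0<\beta<1$ and unit prices $\lambda_1,\dots,\lambda_n>0$. Consider the two-stage Stackelberg game in which the platform (leader) chooses a reward $R\in[0,B]$, and then miners $s_1,\dots,s_n$ (followers) play the miners' game in which $s_i$ chooses $\mu_i\ge0$ with profit $P_i=\frac{\mu_i}{\sum_{j}\mu_j}RN-\lambda_i\mu_i$ (the fraction being $0$ if $\sum_j\mu_j=0$). The platform's utility is $$U(R,\boldsymbol{\mu})=\alpha\left[\sigma\Big(\beta\sum_{i=1}^n\mu_i\Big)-\tfrac12\right]-R,\qquad \sigma(x)=\frac{1}{1+e^{-x}}.$$ Then there exists a unique Stackelberg equilibrium $(\boldsymbol{\mu}^*,R^* )$ of this game.
   Context: For each $R\in[0,B]$ the miners' game has a unique Nash equilibrium $\boldsymbol{\mu}^{NE}(R)$ (a profile with $\mu_i\ge0$ from which no miner can strictly increase its profit by a unilateral deviation to another $\mu_i\ge 0$). A Stackelberg equilibrium is a pair $(\boldsymbol{\mu}^*,R^* )$ with $R^*\in[0,B]$ such that $\boldsymbol{\mu}^*=\boldsymbol{\mu}^{NE}(R^* )$ (i.e. $P_i(\mu_i^*\mid\boldsymbol{\mu}^*_{-i},R^* )\ge P_i(\mu_i\mid\boldsymbol{\mu}^*_{-i},R^* )$ for all $i$ and all $\mu_i\ge0$) and $U(R^*,\boldsymbol{\mu}^{NE}(R^* ))\ge U(R,\boldsymbol{\mu}^{NE}(R))$ for all $R\in[0,B]$. *)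

From mathcomp Require Import all_boot all_order all_algebra.
From mathcomp Require Import reals sequences exp.
Set Implicit Arguments. Unset Strict Implicit. Unset Printing Implicit Defensive.
Import Order.TTheory GRing.Theory Num.Theory.
Local Open Scope ring_scope.

Section Game.
Variables (R : realType) (n : nat).

Definition total (mu : 'I_n -> R) : R := \sum_(j < n) mu j.

Definition profit (N : R) (lam : 'I_n -> R) (Rw : R) (mu : 'I_n -> R) (i : 'I_n) : R :=
  (if total mu == 0 then 0 else mu i / total mu) * Rw * N - lam i * mu i.

Definition deviate (mu : 'I_n -> R) (i : 'I_n) (x : R) : 'I_n -> R :=
  fun j => if j == i then x else mu j.

Definition is_NE (N : R) (lam : 'I_n -> R) (Rw : R) (mu : 'I_n -> R) : Prop :=
  (forall i, 0 <= mu i) /\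
  forall i (x : R), 0 <= x ->
    profit N lam Rw (deviate mu i x) i <= profit N lam Rw mu i.

Definition sigmoid (x : R) : R := 1 / (1 + expR (- x)).

Definition utility (alpha beta : R) (Rw : R) (mu : 'I_n -> R) : R :=
  alpha * (sigmoid (beta * total mu) - 1 / 2) - Rw.

(* Stackelberg equilibrium: mu* is the NE at R*, and R* maximizes
   U(R, mu^NE(R)) over [0,B]; mu^NE(R) ranges over the (unique) NE at R. *)
Definition is_SE (N B alpha beta : R) (lam : 'I_n -> R)
    (mu : 'I_n -> R) (Rs : R) : Prop :=
  [/\ 0 <= Rs <= B, is_NE N lam Rs mu &
      forall (Rw : R) (nu : 'I_n -> R), 0 <= Rw <= B -> is_NE N lam Rw nu ->
        utility alpha beta Rw nu <= utility alpha beta Rs mu].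

End Game.

From Pilot Require Import Defs.
From mathcomp Require Import all_boot all_order all_algebra.
From mathcomp Require Import reals sequences exp.
From mathcomp Require Import boolp topology normedtype derive.
From mathcomp Require Import ring lra.
Import Order.TTheory GRing.Theory Num.Theory.
Import numFieldNormedType.Exports.
Local Open Scope ring_scope.

Set Implicit Arguments.
Unset Strict Implicit.
Unset Printing Implicit Defensive.

(* For a positive reward R, a miner facing a positive total hashpower T of
   the others maximises x / (x + T) * R N - lam_i x; by the first-order
   condition its best response is the total hashpower S times
   max(0, 1 - lam_i S / (R N)), and at an equilibrium nobody faces T = 0.
   Summing over the miners, s = S / (R N) solves
   sum_i max(0, 1 - lam_i s) = 1, whose left side decreases strictly from
   n >= 2 to 0, so s is unique and the Nash equilibrium is
   mu_i(R) = R N s max(0, 1 - lam_i s).  The platform's utility along it is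
   alpha (sigma(beta N s R) - 1/2) - R, strictly midpoint-concave on R >= 0
   because sigma is, so it has exactly one maximiser on [0, B]. *)

Local Notation total := Defs.total.

Lemma linear_le_quadratic (R : realFieldType) (a c m : R) : 0 < m -> 0 <= a ->
  (forall d, - a <= d -> c * d <= m * d ^+ 2) <-> c <= 0 /\ (0 < a -> 0 <= c).
Proof.
move=> m_gt0 a_ge0; split=> [le_cd|[c_le0 c_ge0] d a_le_d]; last first.
  have [a_gt0|a_le0] := ltrP 0 a.
    by rewrite (@le_anti _ _ c 0) ?c_le0 ?c_ge0 // mul0r mulr_ge0 ?sqr_ge0 ?ltW.
  have d_ge0 : 0 <= d by lra.
  by apply: (@le_trans _ _ 0); [rewrite mulr_le0_ge0 | rewrite mulr_ge0 ?sqr_ge0 ?ltW].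
split=> [|a_gt0]; rewrite leNgt; apply/negP.
  move=> c_gt0; pose d := c / (2 * m).
  have d_gt0 : 0 < d by rewrite divr_gt0 ?mulr_gt0.
  have cd : c * d = 2 * (m * d ^+ 2) by rewrite /d; field; rewrite gt_eqF.
  have := le_cd d (ltac:(lra)).
  have : 0 < m * d ^+ 2 by rewrite mulr_gt0 ?exprn_gt0.
  lra.
move=> c_lt0; pose d := Num.max (- a) (c / (2 * m)).
have d_lt0 : d < 0 by rewrite gt_max oppr_lt0 a_gt0 pmulr_llt0 ?invr_gt0 ?mulr_gt0.
have md : c / 2 <= m * d.
  have -> : c / 2 = m * (c / (2 * m)) by field; rewrite gt_eqF.
  by rewrite ler_pM2l // /d le_max lexx orbT.
have := le_cd d (ltac:(by rewrite /d le_max lexx)).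
have : m * d ^+ 2 <= c / 2 * d by rewrite expr2 mulrA ler_nM2r.
nra.
Qed.

Definition share_payoff (R : realFieldType) (V T l x : R) : R :=
  x / (x + T) * V - l * x.

Section BestResponse.
Variables (R : realFieldType) (V T l : R).

Lemma share_payoff_sub (a x : R) : 0 < T -> 0 <= a -> 0 <= x ->
  (share_payoff V T l x - share_payoff V T l a) * ((x + T) * (a + T)) =
  (V * T - l * (a + T) ^+ 2) * (x - a) - l * (a + T) * (x - a) ^+ 2.
Proof.
move=> T_gt0 a_ge0 x_ge0.
have aT_neq0 : a + T != 0 by rewrite gt_eqF //; lra.
have xT_neq0 : x + T != 0 by rewrite gt_eqF //; lra.
by rewrite /share_payoff; field; rewrite aT_neq0 xT_neq0.
Qed.

Lemma best_response_quadratic (a : R) : 0 < T -> 0 <= a ->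
  (forall x, 0 <= x -> share_payoff V T l x <= share_payoff V T l a) <->
  (forall d, - a <= d ->
     (V * T - l * (a + T) ^+ 2) * d <= l * (a + T) * d ^+ 2).
Proof.
move=> T_gt0 a_ge0; set S := a + T; set c := V * T - l * S ^+ 2.
have S_gt0 : 0 < S by rewrite /S; lra.
split=> [br d a_le_d|br x x_ge0].
  have x_ge0 : 0 <= a + d by lra.
  have := share_payoff_sub T_gt0 a_ge0 x_ge0.
  rewrite -/S -/c (_ : a + d - a = d); last by ring.
  suff : (share_payoff V T l (a + d) - share_payoff V T l a) * ((a + d + T) * S) <= 0.
    by lra.
  by rewrite mulr_le0_ge0 ?subr_le0 ?br // mulr_ge0 ?ltW //; lra.
have := share_payoff_sub T_gt0 a_ge0 x_ge0; rewrite -/S -/c => E.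
rewrite -subr_le0 -(pmulr_rle0 _ (_ : 0 < (x + T) * S)) ?mulr_gt0 //; last lra.
by rewrite mulrC E subr_le0 br //; lra.
Qed.

Lemma kkt_share_iff (a : R) : 0 < V -> 0 < T -> 0 <= a ->
  let S := a + T in
  (V * T - l * S ^+ 2 <= 0 /\ (0 < a -> 0 <= V * T - l * S ^+ 2)) <->
  a = S * Num.max 0 (1 - l * (S / V)).
Proof.
move=> V_gt0 T_gt0 a_ge0 S; set c := V * T - l * S ^+ 2.
have S_gt0 : 0 < S by rewrite /S; lra.
have cE : c = S * (V - l * S) - V * a by rewrite /c /S; ring.
have [w_gt0|w_le0] := ltrP 0 (1 - l * (S / V)).
  have VlS_gt0 : 0 < V - l * S.
    by move: w_gt0; rewrite mulrA subr_gt0 ltr_pdivrMr // mul1r subr_gt0.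
  have -> : S * (1 - l * (S / V)) = S * (V - l * S) / V by field; rewrite gt_eqF.
  have SVlS_gt0 : 0 < S * (V - l * S) by rewrite mulr_gt0.
  split=> [[c_le0 c_ge0]|aE].
    have a_gt0 : 0 < a.
      by rewrite lt_neqAle a_ge0 andbT; apply/eqP => a0; move: c_le0; rewrite cE -a0; lra.
    have Va : V * a = S * (V - l * S) by have := c_ge0 a_gt0; lra.
    by rewrite -Va mulrC mulKf ?gt_eqF.
  have c0 : c = 0 by rewrite cE aE; field; rewrite gt_eqF.
  by rewrite c0 lexx.
have VlS_le0 : V - l * S <= 0.
  by move: w_le0; rewrite mulrA subr_le0 ler_pdivlMr // mul1r subr_le0.
have SVlS_le0 : S * (V - l * S) <= 0 by rewrite mulr_ge0_le0 // ltW.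
rewrite mulr0; split=> [[_ c_ge0]|a0].
  apply/eqP; rewrite eq_le a_ge0 andbT leNgt; apply/negP => a_gt0.
  have := c_ge0 a_gt0; have : 0 < V * a by rewrite mulr_gt0.
  lra.
by rewrite cE a0; split; lra.
Qed.

Lemma best_response_iff (a : R) : 0 < V -> 0 < T -> 0 < l -> 0 <= a ->
  (forall x, 0 <= x -> share_payoff V T l x <= share_payoff V T l a) <->
  a = (a + T) * Num.max 0 (1 - l * ((a + T) / V)).
Proof.
move=> V_gt0 T_gt0 l_gt0 a_ge0.
have lS_gt0 : 0 < l * (a + T) by rewrite mulr_gt0 //; lra.
by rewrite best_response_quadratic // linear_le_quadratic // kkt_share_iff.
Qed.

End BestResponse.

Lemma continuous_sum (R : realType) (I : Type) (r : seq I) (F : I -> R -> R) :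
  (forall i, continuous (F i)) -> continuous (fun x => \sum_(i <- r) F i x).
Proof.
move=> F_cont; elim: r => [|i r IHr].
  by under eq_fun do rewrite big_nil; exact: cst_continuous.
under eq_fun do rewrite big_cons.
by move=> x; apply: continuousD; [exact: F_cont | exact: IHr].
Qed.

Section MinersGame.
Variables (R : realType) (n : nat) (N : R) (lam : 'I_n -> R).
Hypotheses (N_gt0 : 0 < N) (lam_gt0 : forall i, 0 < lam i).

Lemma total_deviate (mu : 'I_n -> R) i x :
  total (deviate mu i x) = x + (total mu - mu i).
Proof.
rewrite /Defs.total (bigD1 i) //= [in RHS](bigD1 i) //= /deviate eqxx.
by rewrite (eq_bigr mu) => [|j /negbTE ->]; first ring.
Qed.

Lemma deviate_self (mu : 'I_n -> R) i : deviate mu i (mu i) = mu.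
Proof. by apply: funext => j; rewrite /deviate; case: eqP => [->|]. Qed.

Lemma profit_deviate (Rw : R) (mu : 'I_n -> R) i x :
  0 < total mu - mu i -> 0 <= x ->
  profit N lam Rw (deviate mu i x) i =
  share_payoff (Rw * N) (total mu - mu i) (lam i) x.
Proof.
move=> T_gt0 x_ge0; rewrite /profit /share_payoff total_deviate /deviate eqxx.
by rewrite gt_eqF ?mulrA //; lra.
Qed.

Lemma is_NE_others_gt0 (Rw : R) (nu : 'I_n -> R) i :
  0 < Rw -> is_NE N lam Rw nu -> 0 < total nu - nu i.
Proof.
move=> Rw_gt0 [nu_ge0 nu_NE]; set V := Rw * N.
have V_gt0 : 0 < V by rewrite mulr_gt0.
have l_gt0 := lam_gt0 i; have a_ge0 := nu_ge0 i.
have T_ge0 : 0 <= total nu - nu i.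
  by rewrite /Defs.total (bigD1 i) //= addrAC subrr add0r sumr_ge0.
rewrite lt_neqAle T_ge0 andbT; apply/eqP => T0.
(* Alone, any x > 0 wins the whole reward, so halving a positive hashpower,
   or entering with a small one, is a strict improvement. *)
have alone x : 0 < x -> profit N lam Rw (deviate nu i x) i = V - lam i * x.
  move=> x_gt0; rewrite /profit total_deviate -T0 addr0 gt_eqF // /deviate eqxx.
  by rewrite divff ?gt_eqF // mul1r.
have [a_gt0|a_le0] := ltrP 0 (nu i).
  have := nu_NE i (nu i / 2) (ltac:(lra)).
  rewrite -[in X in _ <= X](deviate_self nu i) !alone ?divr_gt0 // mulrA.
  by have := mulr_gt0 l_gt0 a_gt0; lra.
have := nu_NE i (V / (2 * lam i)) (ltac:(by rewrite ltW ?divr_gt0 ?mulr_gt0)).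
rewrite alone ?divr_gt0 ?mulr_gt0 // /profit -(subrK (nu i) (total nu)) -T0 add0r.
have -> : nu i = 0 by lra.
rewrite eqxx mulr0 !mul0r subrr (_ : lam i * (V / (2 * lam i)) = V / 2); first lra.
by field; rewrite gt_eqF.
Qed.

Definition share (s : R) (i : 'I_n) : R := Num.max 0 (1 - lam i * s).

Definition share_sum (s : R) : R := \sum_(i < n) share s i.

Lemma share_ge0 s i : 0 <= share s i.
Proof. by rewrite le_max lexx. Qed.

Lemma share_lt1 s i : 0 < s -> share s i < 1.
Proof. by move=> s_gt0; rewrite gt_max ltr01 /= ltrBlDr ltrDl mulr_gt0. Qed.

Lemma share_le s1 s2 i : s1 <= s2 -> share s2 i <= share s1 i.
Proof.
move=> le_s12; rewrite ge_max share_ge0 le_max.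
by rewrite lerD2l lerN2 (ler_pM2l (lam_gt0 i)) le_s12 orbT.
Qed.

Lemma share_lt s1 s2 i : s1 < s2 -> 0 < share s2 i -> share s2 i < share s1 i.
Proof.
move=> lt_s12; rewrite /share lt_max ltxx /= => pos.
by rewrite (max_idPr (ltW pos)) lt_max ltrD2l ltrN2 (ltr_pM2l (lam_gt0 i)) lt_s12 orbT.
Qed.

Lemma share_sum_lt s1 s2 :
  s1 < s2 -> 0 < share_sum s2 -> share_sum s2 < share_sum s1.
Proof.
move=> lt_s12; rewrite lt0r psumr_neq0 => [/andP[/hasP[i _ /= pos] _]|j _].
  rewrite /share_sum (bigD1 i) //= [X in _ < X](bigD1 i) //=.
  by rewrite ltr_leD ?share_lt // ler_sum // => j _; rewrite share_le ?ltW.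
exact: share_ge0.
Qed.

Lemma share_sum_inj s1 s2 : share_sum s1 = 1 -> share_sum s2 = 1 -> s1 = s2.
Proof.
wlog le_s12 : s1 s2 / s1 <= s2 => [sym h1 h2|].
  by case: (leP s1 s2) => [|/ltW] le; [exact: sym | move/esym: (sym _ _ le h2 h1)].
move=> h1 h2; apply/eqP; rewrite eq_le le_s12 /= leNgt; apply/negP => lt_s12.
by have := share_sum_lt lt_s12; rewrite h1 h2 ltxx ltr01 => /(_ isT).
Qed.

Lemma continuous_share i : continuous (share^~ i).
Proof.
move=> s; apply: (@continuous_max _ _ (fun=> 0) (fun s => 1 - lam i * s)).
  exact: cst_continuous.
apply: continuousB; first exact: cst_continuous.
by apply: continuousM; [exact: cst_continuous | exact: cvg_id].
Qed.

Lemma share_sum_eq1 : (1 < n)%N -> exists2 s, 0 < s & share_sum s = 1.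
Proof.
move=> n_gt1.
have sum0 : share_sum 0 = n%:R.
  rewrite /share_sum (eq_bigr (fun=> 1)) ?sumr_const ?card_ord // => i _.
  by rewrite /share mulr0 subr0 (max_idPr ler01).
pose b := \sum_(i < n) (lam i)^-1.
have sumb : share_sum b = 0.
  rewrite /share_sum big1 // => i _; apply/max_idPl.
  have : (lam i)^-1 <= b.
    by rewrite /b (bigD1 i) //= lerDl sumr_ge0 // => j _; rewrite invr_ge0 ltW.
  by rewrite subr_le0 -(ler_pM2l (lam_gt0 i)) mulfV ?gt_eqF.
have b_ge0 : 0 <= b by rewrite sumr_ge0 // => i _; rewrite invr_ge0 ltW.
have [s] : exists2 s, s \in `[0, b] & share_sum s = 1.
  apply: IVT => //.
    by apply: continuous_subspaceT; apply: continuous_sum => i; exact: continuous_share.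
  by rewrite sum0 sumb ge_min le_max ler01 ler1n orbT (ltnW n_gt1).
rewrite in_itv /= => /andP[s_ge0 _] sum1; exists s => //.
rewrite lt_neqAle s_ge0 andbT; apply: contraTneq n_gt1 => s0.
by move: sum1; rewrite -s0 sum0 => /eqP; rewrite pnatr_eq1 => /eqP ->.
Qed.

Lemma best_response_share (Rw : R) (mu : 'I_n -> R) i :
  0 < Rw -> (forall j, 0 <= mu j) -> 0 < total mu - mu i ->
  (forall x, 0 <= x ->
     profit N lam Rw (deviate mu i x) i <= profit N lam Rw mu i) <->
  mu i = total mu * share (total mu / (Rw * N)) i.
Proof.
move=> Rw_gt0 mu_ge0 T_gt0.
have self : profit N lam Rw mu i = share_payoff (Rw * N) (total mu - mu i) (lam i) (mu i).
  by rewrite -{1}(deviate_self mu i) profit_deviate.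
rewrite /share -[in RHS](subrKC (mu i) (total mu)) -best_response_iff ?mulr_gt0 //.
by split=> br x x_ge0; have := br x x_ge0; rewrite self profit_deviate.
Qed.

Section Equilibrium.
Variable s : R.
Hypotheses (s_gt0 : 0 < s) (share_sum_s : share_sum s = 1).

Definition ne_profile (Rw : R) (i : 'I_n) : R := Rw * N * s * share s i.

Lemma total_ne_profile (Rw : R) : total (ne_profile Rw) = Rw * N * s.
Proof. by rewrite /Defs.total /ne_profile -mulr_sumr -/(share_sum s) share_sum_s mulr1. Qed.

Lemma ne_profile_ge0 (Rw : R) i : 0 <= Rw -> 0 <= ne_profile Rw i.
Proof.
move=> Rw_ge0; apply: mulr_ge0 (share_ge0 _ _).
by rewrite !mulr_ge0 ?(ltW N_gt0) ?(ltW s_gt0).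
Qed.

Lemma is_NE_ne_profile (Rw : R) : 0 <= Rw -> is_NE N lam Rw (ne_profile Rw).
Proof.
move=> Rw_ge0; split=> [i|i x x_ge0]; first exact: ne_profile_ge0.
move: Rw_ge0; rewrite le_eqVlt => /orP[/eqP Rw0|Rw_gt0].
  rewrite /profit /deviate eqxx /ne_profile -Rw0 !(mulr0, mul0r) sub0r subr0.
  by rewrite oppr_le0 mulr_ge0 ?(ltW (lam_gt0 i)).
have T_gt0 : 0 < total (ne_profile Rw) - ne_profile Rw i.
  rewrite total_ne_profile /ne_profile subr_gt0 gtr_pMr ?share_lt1 //.
  by rewrite !mulr_gt0.
move: x x_ge0; apply/best_response_share => //.
  by move=> j; rewrite ne_profile_ge0 ?ltW.
by rewrite total_ne_profile /ne_profile (mulrC (Rw * N) s) mulfK ?gt_eqF ?mulr_gt0.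
Qed.

Lemma is_NE_eq_ne_profile (Rw : R) (nu : 'I_n -> R) :
  0 <= Rw -> is_NE N lam Rw nu -> nu = ne_profile Rw.
Proof.
rewrite le_eqVlt => /orP[/eqP<-|Rw_gt0] nuNE; have [nu_ge0 nu_br] := nuNE;
  apply: funext => i.
  rewrite /ne_profile !mul0r; apply/eqP; rewrite eq_le nu_ge0 andbT.
  have := nu_br i 0 (lexx 0); rewrite /profit /deviate eqxx !(mulr0, mul0r) sub0r.
  by rewrite oppr0 sub0r oppr_ge0 pmulr_rle0.
have T_gt0 := is_NE_others_gt0 i Rw_gt0 nuNE.
set S := total nu in T_gt0.
have nuE j : nu j = S * share (S / (Rw * N)) j.
  exact: (best_response_share Rw_gt0 nu_ge0 (is_NE_others_gt0 j Rw_gt0 nuNE)).1 (nu_br j).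
have S_gt0 : 0 < S by have := nu_ge0 i; lra.
have sE : S / (Rw * N) = s.
  apply: share_sum_inj => //; apply: (mulfI (lt0r_neq0 S_gt0)).
  by rewrite mulr1 /share_sum mulr_sumr; apply/esym/eq_bigr => j _; rewrite -nuE.
rewrite nuE sE /ne_profile; congr (_ * _).
by rewrite -sE mulrC mulfVK ?gt_eqF ?mulr_gt0.
Qed.

End Equilibrium.

End MinersGame.

Section Stackelberg.
Variables (R : realType) (n : nat) (N : R) (lam : 'I_n -> R) (m : R -> 'I_n -> R).
Hypothesis is_NE_m : forall Rw nu, 0 <= Rw -> is_NE N lam Rw nu <-> nu = m Rw.

Lemma is_SE_iff (B alpha beta : R) mu Rs : is_SE N B alpha beta lam mu Rs <->
  [/\ 0 <= Rs <= B, mu = m Rs &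
      forall Rw, 0 <= Rw <= B ->
        utility alpha beta Rw (m Rw) <= utility alpha beta Rs (m Rs)].
Proof.
split=> [[/[dup] /andP[Rs_ge0 _] Rs_in NE opt]|[/[dup] /andP[Rs_ge0 _] Rs_in -> opt]].
  have mu_eq := (is_NE_m _ Rs_ge0).1 NE.
  split=> // Rw /[dup] /andP[Rw_ge0 _] Rw_in; rewrite -mu_eq.
  by apply: opt => //; apply/is_NE_m.
split=> //; first exact/is_NE_m.
by move=> Rw nu /[dup] /andP[Rw_ge0 _] Rw_in /is_NE_m -> //; apply: opt.
Qed.

End Stackelberg.

Lemma sigmoid_midpoint_lt (R : realType) (a b : R) : 0 <= a -> a < b ->
  sigmoid a + sigmoid b < 2 * sigmoid ((a + b) / 2).
Proof.
move=> a_ge0 lt_ab; rewrite /sigmoid.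
set p := expR (- (a / 2)); set q := expR (- (b / 2)).
have ea : expR (- a) = p * p by rewrite -expRD; congr expR; lra.
have eb : expR (- b) = q * q by rewrite -expRD; congr expR; lra.
have em : expR (- ((a + b) / 2)) = p * q by rewrite -expRD; congr expR; lra.
rewrite ea eb em.
have p_gt0 : 0 < p by exact: expR_gt0.
have q_gt0 : 0 < q by exact: expR_gt0.
have lt_qp : q < p by rewrite ltr_expR; lra.
have p_le1 : p <= 1 by rewrite -expR0 ler_expR; lra.
have pq_lt1 : p * q < 1 by nra.
rewrite -subr_gt0.
have -> : 2 * (1 / (1 + p * q)) - (1 / (1 + p * p) + 1 / (1 + q * q)) =
    (1 - p * q) * (p - q) ^+ 2 / ((1 + p * q) * (1 + p * p) * (1 + q * q)).
  by field; rewrite !gt_eqF //; nra.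
by rewrite divr_gt0 ?mulr_gt0 ?exprn_gt0 ?subr_gt0 //; nra.
Qed.

Lemma continuous_sigmoid (R : realType) : continuous (@sigmoid R).
Proof.
move=> x; apply: (@continuousM _ _ (fun=> 1) (fun x => (1 + expR (- x))^-1)).
  exact: cst_continuous.
apply: continuousV; first by rewrite gt_eqF // ltr_pwDr ?expR_gt0.
apply: continuousD; first exact: cst_continuous.
apply: (@continuous_comp _ _ _ -%R expR); last exact: continuous_expR.
exact: continuousN (@cvg_id _ _).
Qed.

Lemma midpoint_strict_argmax_unique (R : realFieldType) (f : R -> R) (a b x1 x2 : R) :
  (forall x y, a <= x -> x < y -> y <= b -> f x + f y < 2 * f ((x + y) / 2)) ->
  a <= x1 <= b -> a <= x2 <= b ->
  (forall t, a <= t <= b -> f t <= f x1) ->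
  (forall t, a <= t <= b -> f t <= f x2) -> x1 = x2.
Proof.
move=> f_mid.
wlog le_x12 : x1 x2 / x1 <= x2 => [sym x1_in x2_in max1 max2|].
  by case: (leP x1 x2) => [|/ltW] le; [exact: sym | apply/esym/sym].
move=> /andP[a_le_x1 _] /andP[_ x2_le_b] max1 max2.
apply/eqP; rewrite eq_le le_x12 /= leNgt; apply/negP => lt_x12.
have mid_in : a <= (x1 + x2) / 2 <= b by apply/andP; split; lra.
have := f_mid _ _ a_le_x1 lt_x12 x2_le_b.
have := max1 _ mid_in; have := max2 _ mid_in.
lra.
Qed.

Definition leader_payoff (R : realType) (k alpha Rw : R) : R :=
  alpha * (sigmoid (k * Rw) - 1 / 2) - Rw.

Lemma continuous_leader_payoff (R : realType) (k alpha : R) :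
  continuous (leader_payoff k alpha).
Proof.
move=> x; suff : {for x, continuous (fun r => alpha * (sigmoid (k * r) - 1 / 2) - r)} by [].
apply: continuousB; last exact: cvg_id.
apply: continuousM; first exact: cst_continuous.
apply: continuousB; last exact: cst_continuous.
apply: continuous_comp; last exact: continuous_sigmoid.
by apply: continuousM; [exact: cst_continuous | exact: cvg_id].
Qed.

Lemma leader_payoff_midpoint_lt (R : realType) (k alpha r1 r2 : R) :
  0 < k -> 0 < alpha -> 0 <= r1 -> r1 < r2 ->
  leader_payoff k alpha r1 + leader_payoff k alpha r2 <
  2 * leader_payoff k alpha ((r1 + r2) / 2).
Proof.
move=> k_gt0 alpha_gt0 r1_ge0 lt_r12.
have lt_kr12 : k * r1 < k * r2 by rewrite ltr_pM2l.
have := sigmoid_midpoint_lt (mulr_ge0 (ltW k_gt0) r1_ge0) lt_kr12.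
rewrite (_ : (k * r1 + k * r2) / 2 = k * ((r1 + r2) / 2)); last by ring.
rewrite -(ltr_pM2l alpha_gt0) /leader_payoff; lra.
Qed.

Theorem theorem4 (R : realType) (n : nat) (N B alpha beta : R)
  (lam : 'I_n -> R) :
  (2 <= n)%N -> 0 < N -> 0 < B -> 1 < alpha -> 0 < beta -> beta < 1 ->
  (forall i, 0 < lam i) ->
  exists (mu : 'I_n -> R) (Rs : R),
    is_SE N B alpha beta lam mu Rs /\
    forall (mu' : 'I_n -> R) (Rs' : R),
      is_SE N B alpha beta lam mu' Rs' -> mu' = mu /\ Rs' = Rs.
Proof.
move=> n_gt1 N_gt0 B_gt0 alpha_gt1 beta_gt0 _ lam_gt0.
have [s s_gt0 share_sum_s] := share_sum_eq1 lam_gt0 n_gt1.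
pose m := ne_profile N lam s.
have is_NE_m Rw nu : 0 <= Rw -> is_NE N lam Rw nu <-> nu = m Rw.
  move=> Rw_ge0; split; first exact: is_NE_eq_ne_profile.
  by move=> ->; exact: is_NE_ne_profile.
pose f := leader_payoff (beta * (N * s)) alpha.
have utility_m Rw : utility alpha beta Rw (m Rw) = f Rw.
  by rewrite /utility total_ne_profile // /f /leader_payoff; congr (_ * (sigmoid _ - _) - _); ring.
have [c] := @EVT_max _ f 0 B (ltW B_gt0) (continuous_subspaceT (@continuous_leader_payoff _ _ _)).
rewrite in_itv /= => c_in c_max.
exists (m c), c; split=> [|mu' Rs' /(is_SE_iff is_NE_m)[Rs'_in -> Rs'_max]].
  apply/(is_SE_iff is_NE_m); split=> // Rw Rw_in.
  by rewrite !utility_m c_max ?in_itv.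
suff -> : Rs' = c by [].
apply: (midpoint_strict_argmax_unique (f := f) _ Rs'_in c_in).
- move=> x y x_ge0 lt_xy _; apply: leader_payoff_midpoint_lt => //; last lra.
  by rewrite !mulr_gt0.
- by move=> t t_in; rewrite -!utility_m Rs'_max.
- by move=> t t_in; apply: c_max; rewrite in_itv.
Qed.
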